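(* Let $Y,T\subset\mathbb{P}^r$ be integral projective varieties such that $\langle Y\cup T\rangle=\mathbb{P}^r$ and $M=\langle Y\rangle$ has dimension $m\le r-2$. Then there is no point $o\in\mathbb{P}^r\setminus(M\cup T)$ such that the linear projection $\pi_o:\mathbb{P}^r\setminus\{o\}\to\mathbb{P}^{r-1}$ satisfies $\pi_o(T)\subseteq\pi_o(Y)$.
   Context: Work over an algebraically closed field of characteristic zero; $\langle\cdot\rangle$ denotes linear span. *)

(* Projective space P^r over K is modelled through its
   affine cone: points of P^r are nonzero vectors of K^(r+1) = 'rV[K]_(r.+1)
   up to nonzero scalars; a subset of P^r is a scaling-invariant set of
   nonzero vectors. *)
From HB Require Import structures.
From mathcomp Require Import all_boot all_order all_algebra.
From mathcomp Require Import mpoly.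
Set Implicit Arguments. Unset Strict Implicit. Unset Printing Implicit Defensive.
Import GRing.Theory.
Local Open Scope ring_scope.

Definition vec (K : fieldType) (r : nat) := 'rV[K]_(r.+1).

Definition pset (K : fieldType) (r : nat) := vec K r -> Prop.

Definition is_cone (K : fieldType) (r : nat) (X : pset K r) : Prop :=
  forall v, X v -> v != 0 /\ forall c : K, c != 0 -> X (c *: v).

Definition homog_family (K : fieldType) (r : nat) (S : {mpoly K[r.+1]} -> Prop) :=
  forall p, S p -> exists d : nat, p \is d.-homog.

Definition zero_locus (K : fieldType) (r : nat) (S : {mpoly K[r.+1]} -> Prop)
  : pset K r :=
  fun v => v != 0 /\ forall p, S p -> p.@[fun i => v 0 i] = 0.

Definition proj_closed (K : fieldType) (r : nat) (X : pset K r) : Prop :=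
  exists S, homog_family S /\ forall v, X v <-> zero_locus S v.

Definition integral_variety (K : fieldType) (r : nat) (X : pset K r) : Prop :=
  proj_closed X /\ (exists v, X v) /\
  forall A B : pset K r, proj_closed A -> proj_closed B ->
    (forall v, X v <-> (A v \/ B v)) ->
    (forall v, X v <-> A v) \/ (forall v, X v <-> B v).

Definition is_span (K : fieldType) (r : nat) (X : pset K r)
  (U : {vspace vec K r}) : Prop :=
  (forall v, X v -> v \in U) /\
  forall U' : {vspace vec K r}, (forall v, X v -> v \in U') -> (U <= U')%VS.

Definition psetU (K : fieldType) (r : nat) (X Y : pset K r) : pset K r :=
  fun v => X v \/ Y v.

(* linear projection from o: the point pi_o(x) of P^(r-1) = P(K^(r+1)/<o>)
   is represented by the line <o, x> through o and x (a 2-dim subspace). *)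
Definition proj_from (K : fieldType) (r : nat) (o x : vec K r)
  : {vspace vec K r} := (<[o]> + <[x]>)%VS.

From HB Require Import structures.
From mathcomp Require Import all_boot all_order all_algebra.
From mathcomp Require Import mpoly.
Import GRing.Theory.
Local Open Scope ring_scope.

(* If pi_o(T) lies in pi_o(Y), every point of T lies on a line joining o to a
   point of Y, so T is contained in the join <o, M> of o with M = <Y>.  Then
   Y u T spans at most <o, M>, of dimension m + 1 <= r - 1, so it cannot
   span P^r. *)

Section LineJoin.

Context {K : fieldType} {vT : vectType K}.
Implicit Types (o x y : vT) (U : {vspace vT}).

Lemma memv_add_line_of_join o x y U :
  (<[o]> + <[x]> = <[o]> + <[y]>)%VS -> y \in U -> x \in (<[o]> + U)%VS.
Proof.
move=> join_xy yU.
have : x \in (<[o]> + <[x]>)%VS by apply: (subvP (addvSr _ _)); apply: memv_line.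
by rewrite join_xy; apply/subvP/addvS; rewrite // -memvE.
Qed.

Lemma dimv_add_line o U : (\dim (<[o]> + U) <= (\dim U).+1)%N.
Proof.
apply: leq_trans (dimv_add_leqif _ _) _.
by rewrite dim_vline; case: (o != 0).
Qed.

End LineJoin.

Theorem lemma3p7 (K : closedFieldType) (charK0 : [pchar K] =i pred0)
  (r : nat) (Y T : pset K r) (M : {vspace vec K r}) (m : nat) :
  is_cone Y -> is_cone T ->
  integral_variety Y -> integral_variety T ->
  is_span (psetU Y T) fullv ->
  is_span Y M -> \dim M = m.+1 -> (m + 2 <= r)%N ->
  ~ (exists o : vec K r,
       [/\ o != 0, o \notin M, ~ T o &
        forall t, T t -> exists2 y, Y y & proj_from o t = proj_from o y]).
Proof.
move=> _ _ _ _ [_ spanYT_least] [Y_sub_M _] dimM le_m2_r [o [_ _ _ proj_TY]].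
have full_sub_join : (fullv <= <[o]> + M)%VS.
  apply: spanYT_least => v [Yv | Tv].
    by apply: (subvP (addvSr _ _)); apply: Y_sub_M.
  have [y Yy join_vy] := proj_TY v Tv.
  exact: memv_add_line_of_join join_vy (Y_sub_M y Yy).
have := leq_trans (dimvS full_sub_join) (dimv_add_line o M).
rewrite dimvf /dim /= mul1n dimM.
by rewrite addn2 in le_m2_r; rewrite leqNgt ltnS le_m2_r.
Qed.
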